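(* There exist $0\le a<c$ and $\Delta q>0$ such that, when $1/b$ is uniformly distributed on $[a,c]$, $$\frac{\mathbb E(1/b)}{M'_{1/b}(-\Delta q)}<M_{1/b}(\Delta q),$$ i.e. the R$^2$DP Laplace mechanism with uniformly distributed $1/b$ can satisfy the necessary condition for improving on the Laplace mechanism.
   Context: $M_{1/b}(t)=\mathbb E[e^{t/b}]$ is the moment generating function of $1/b$ and $M'_{1/b}$ its derivative; for the uniform distribution on $[a,c]$, $M(t)=\frac{e^{tc}-e^{ta}}{t(c-a)}$ for $t\neq0$ and $M(0)=1$. The R$^2$DP Laplace mechanism adds $\mathrm{Lap}(b)$ noise (density $\frac1{2b}e^{-|x|/b}$) with random scale $b$ to a query of sensitivity $\Delta q$. *)

From Stdlib Require Import Reals.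
From Coquelicot Require Import Coquelicot.
Open Scope R_scope.

Definition unif_density (a c x : R) : R :=
  if Rle_dec a x then (if Rle_dec x c then / (c - a) else 0) else 0.

(* E[1/b] when 1/b ~ Uniform[a,c]: integral of x times the density over [a,c]. *)
Definition unif_mean (a c : R) : R :=
  RInt (fun x => x * unif_density a c x) a c.

(* Moment generating function M_{1/b}(t) = E[e^{t/b}] for 1/b ~ Uniform[a,c]. *)
Definition unif_mgf (a c t : R) : R :=
  RInt (fun x => exp (t * x) * unif_density a c x) a c.

(** The witness is [1/b ~ Uniform[0,1]] and [Δq = 10].  Both sides have closed
    forms: [E(1/b) = 1/2], [M(t) = (e^t - 1)/t] and
    [M'(-10) = (1 - 11 e^-10)/100].  Writing [E = e^10], the inequality becomes
    [500 E < (E - 1)(E - 11)], which holds as soon as [E > 512]; the fourth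
    Taylor polynomial of [exp] at [10] already exceeds [644]. *)

From Stdlib Require Import Reals Lra ssreflect.
From Coquelicot Require Import Coquelicot.
Open Scope R_scope.

Section UniformMoments.

Variables a c : R.
Hypothesis a_lt_c : a < c.

Lemma unif_density_in x : a <= x <= c -> unif_density a c x = / (c - a).
Proof.
move=> [le_ax le_xc]; rewrite /unif_density.
by case: Rle_dec => // -[]; case: Rle_dec.
Qed.

Lemma RInt_mul_unif_density (f : R -> R) (I : R) : is_RInt f a c I ->
  RInt (fun x => f x * unif_density a c x) a c = I / (c - a).
Proof.
move=> intf; apply: is_RInt_unique.
have -> : I / (c - a) = scal (/ (c - a)) I by rewrite /scal /= /mult /=; lra.
apply: is_RInt_ext (is_RInt_scal _ _ _ _ _ intf) => x.
rewrite Rmin_left ?Rmax_right => [hx||]; try lra.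
by rewrite unif_density_in /scal /= /mult /=; lra.
Qed.

Lemma unif_mean_eq : unif_mean a c = (a + c) / 2.
Proof.
rewrite /unif_mean (RInt_mul_unif_density _ (c * c / 2 - a * a / 2)).
  field; lra.
apply: (is_RInt_derive (fun x => x * x / 2)) => x _.
- by auto_derive => //; field.
- exact: continuous_id.
Qed.

Lemma unif_mgf_eq t : t <> 0 ->
  unif_mgf a c t = (exp (t * c) - exp (t * a)) / (t * (c - a)).
Proof.
move=> t_neq0.
rewrite /unif_mgf (RInt_mul_unif_density _ (exp (t * c) / t - exp (t * a) / t)).
  field; lra.
apply: (is_RInt_derive (fun x => exp (t * x) / t)) => x _.
- by auto_derive => //; field.
- apply: (ex_derive_continuous (fun x => exp (t * x))); by auto_derive.
Qed.

Lemma Derive_unif_mgf t : t <> 0 ->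
  Derive (unif_mgf a c) t =
  (t * (c * exp (t * c) - a * exp (t * a)) - (exp (t * c) - exp (t * a)))
    / (t ^ 2 * (c - a)).
Proof.
move=> t_neq0; apply: is_derive_unique.
apply: (is_derive_ext_loc (fun s => (exp (s * c) - exp (s * a)) / (s * (c - a)))).
  apply: filter_imp (open_neq 0 t t_neq0) => s s_neq0.
  by rewrite unif_mgf_eq.
have ca_neq0 : c - a <> 0 by lra.
auto_derive; first exact: Rmult_integral_contrapositive_currified.
by field.
Qed.

End UniformMoments.

Lemma exp10_gt_512 : 512 < exp 10.
Proof.
have := exp_ge_taylor 10 4 ltac:(lra).
by rewrite /Rdiv /=; lra.
Qed.

Lemma uniform01_condition_at_10 (E : R) : 512 < E ->
  1 / 2 / ((- (10) * / E - (/ E - 1)) / (- (10)) ^ 2) < (E - 1) / 10.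
Proof.
move=> E_gt.
have -> : 1 / 2 / ((- (10) * / E - (/ E - 1)) / (- (10)) ^ 2) = 50 * E / (E - 11)
  by field; lra.
have -> : (E - 1) / 10 = 50 * E / (E - 11) + (E * E - 512 * E + 11) / (10 * (E - 11))
  by field; lra.
have : 0 < (E * E - 512 * E + 11) / (10 * (E - 11)) by apply: Rdiv_lt_0_compat; nra.
lra.
Qed.

Theorem lemmaB2 :
  exists a c dq : R, 0 <= a /\ a < c /\ 0 < dq /\
    unif_mean a c / Derive (unif_mgf a c) (- dq) < unif_mgf a c dq.
Proof.
exists 0, 1, 10; do 3 (split; first lra).
rewrite unif_mean_eq ?Derive_unif_mgf ?unif_mgf_eq; try lra.
rewrite !Rmult_0_r !Rmult_0_l !Rmult_1_l !Rmult_1_r exp_0 exp_Ropp.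
rewrite Rplus_0_l !Rminus_0_r !Rmult_1_r.
exact: uniform01_condition_at_10 exp10_gt_512.
Qed.
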